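(* Let $k$ be a field and let $V_1\xrightarrow{f}V_2\xrightarrow{g}V_3$ be a complex of finite-dimensional $k$-vector spaces, with dual complex $V_3^*\xrightarrow{g^*}V_2^*\xrightarrow{f^*}V_1^*$. Fix a nondegenerate bilinear pairing $\langle\,,\rangle$ on $V_2$ and identify $V_2$ with $V_2^*$ via it. Assume $\mathrm{Im}\,f\subset\mathrm{Im}\,g^*$ (under this identification). Then the identification $V_2=V_2^*$ induces a map $\mathrm{Ker}\,g/\mathrm{Im}\,f\to\mathrm{Ker}\,f^*/\mathrm{Im}\,g^*$, and this map is an isomorphism if and only if $\mathrm{Ker}\,g\cap\mathrm{Im}\,g^*\subset\mathrm{Im}\,f$.
   Formalization: The nondegenerate pairing ⟨,⟩ on V₂ is also required to be either symmetric or skew-symmetric, rather than an arbitrary nondegenerate bilinear pairing. The statement above fails without it. *)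

(* finite-dimensional k-vector spaces V_i = k^{n_i} as row vectors
   'rV[F]_n; linear maps act on the right: f(v) = v *m f. *)
From mathcomp Require Import all_boot all_algebra.
Set Implicit Arguments. Unset Strict Implicit. Unset Printing Implicit Defensive.
Import GRing.Theory.
Local Open Scope ring_scope.

Section Defs.
Variable F : fieldType.

(* The dual space (k^n)^* is represented by 'rV[F]_n, the row vector phi
   being the functional  v |-> (v *m phi^T) 0 0. *)
Definition dual_eval (n : nat) (phi v : 'rV[F]_n) : F := (v *m phi^T) 0 0.

(* Dual map of A : k^m -> k^n (v |-> v *m A): psi |-> psi o A, i.e. psi |-> psi *m A^T.
   Indeed dual_eval psi (v *m A) = dual_eval (psi *m A^T) v. *)
Definition dualmap (m n : nat) (A : 'M[F]_(m, n)) : 'M[F]_(n, m) := A^T.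

Definition pairing (n : nat) (B : 'M[F]_n) (x y : 'rV[F]_n) : F :=
  (x *m B *m y^T) 0 0.

Definition nondegenerate_pairing (n : nat) (B : 'M[F]_n) : Prop :=
  (forall x, (forall y, pairing B x y = 0) -> x = 0) /\
  (forall y, (forall x, pairing B x y = 0) -> y = 0).

(* Identification V_2 -> V_2^*, x |-> <x, - >.  One checks
   dual_eval (ident B x) y = pairing B x y. *)
Definition ident (n : nat) (B : 'M[F]_n) (x : 'rV[F]_n) : 'rV[F]_n := x *m B.

Variables (n1 n2 n3 : nat) (f : 'M[F]_(n1, n2)) (g : 'M[F]_(n2, n3))
  (B : 'M[F]_n2).

(* The identification maps Ker g into Ker f^* and Im f into Im g^*, so it
   induces a map Ker g / Im f -> Ker f^* / Im g^*. *)
Definition induced_map_well_defined : Prop :=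
  (forall x : 'rV[F]_n2, x *m g = 0 -> ident B x *m dualmap f = 0) /\
  (forall v : 'rV[F]_n1, exists psi : 'rV[F]_n3,
       ident B (v *m f) = psi *m dualmap g).

(* Injectivity of the induced map on cosets: if x in Ker g is sent into
   Im g^*, then the class of x is zero, i.e. x in Im f. *)
Definition induced_injective : Prop :=
  forall x : 'rV[F]_n2, x *m g = 0 ->
    (exists psi : 'rV[F]_n3, ident B x = psi *m dualmap g) ->
    exists v : 'rV[F]_n1, x = v *m f.

(* Surjectivity of the induced map on cosets: every class phi + Im g^* with
   phi in Ker f^* is the image of the class of some x in Ker g. *)
Definition induced_surjective : Prop :=
  forall phi : 'rV[F]_n2, phi *m dualmap f = 0 ->
    exists x : 'rV[F]_n2, x *m g = 0 /\
      exists psi : 'rV[F]_n3, phi - ident B x = psi *m dualmap g.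

Definition induced_iso : Prop := induced_injective /\ induced_surjective.

End Defs.

(* The identification x |-> x B maps Ker g into Ker f^*: for x in Ker g and
   v in V_1, <v f, x> = +-<x, v f> vanishes because B^T = +-B sends Im f into
   Im g^*, which annihilates Ker g.  It maps Im f into Im g^* by hypothesis, so
   the induced map exists, and it is injective exactly when
   (Ker g) B meets Im g^* only inside (Im f) B.  Injectivity already forces
   surjectivity, by counting dimensions: (Ker g) B + Im g^* lies in Ker f^*,
   and if the intersection lies in (Im f) B its dimension is at least
   (n2 - rk g) + rk g - rk f = dim Ker f^*. *)

From mathcomp Require Import all_boot all_algebra.
From mathcomp Require Import zify.
Import GRing.Theory.
Local Open Scope ring_scope.

Lemma submx_rowwise (F : fieldType) (m p n : nat)
    (A : 'M[F]_(m, n)) (C : 'M[F]_(p, n)) :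
  (forall v : 'rV_m, exists w : 'rV_p, v *m A = w *m C) -> (A <= C)%MS.
Proof.
move=> AC; apply/row_subP => i; rewrite rowE.
by have [w ->] := AC (delta_mx 0 i); apply: submxMl.
Qed.

Lemma mulmx_trmx_eq0 (F : fieldType) (k m n p : nat)
    (A : 'M[F]_(m, n)) (C : 'M[F]_(n, p)) (x : 'M[F]_(k, n)) :
  (A <= C^T)%MS -> x *m C = 0 -> x *m A^T = 0.
Proof. by move=> /submxP[D ->] xC0; rewrite trmx_mul trmxK mulmxA xC0 mul0mx. Qed.

Lemma nondegenerate_row_free (F : fieldType) (n : nat) (B : 'M[F]_n) :
  nondegenerate_pairing B -> row_free B.
Proof.
move=> [nondeg_l _]; rewrite -kermx_eq0; apply/eqP/row_matrixP => i.
rewrite row0; apply: nondeg_l => y.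
by rewrite /pairing -row_mul mulmx_ker row0 mul0mx mxE.
Qed.

Section InducedMap.

Variables (F : fieldType) (n1 n2 n3 : nat).
Variables (f : 'M[F]_(n1, n2)) (g : 'M[F]_(n2, n3)) (B : 'M[F]_n2).

Lemma induced_injective_capmx :
  induced_injective f g B -> (kermx g *m B :&: g^T <= f *m B)%MS.
Proof.
move=> inj; apply/row_subP => i; set y := row i _.
have /submxP[u yE] : (y <= kermx g *m B)%MS.
  by rewrite (submx_trans (row_sub i _)) ?capmxSl.
have /submxP[psi psiE] : (y <= g^T)%MS.
  by rewrite (submx_trans (row_sub i _)) ?capmxSr.
have [v vE] : exists v, u *m kermx g = v *m f.
  apply: inj; first by rewrite -mulmxA mulmx_ker mulmx0.
  by exists psi; rewrite /ident /dualmap -mulmxA -yE.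
by rewrite yE mulmxA vE -mulmxA submxMl.
Qed.

Lemma induced_surjective_addsmx :
  (kermx f^T <= kermx g *m B + g^T)%MS -> induced_surjective f g B.
Proof.
move=> kerfT_sub phi phif0.
have /sub_addsmxP[[u w] /= phiE] : (phi <= kermx g *m B + g^T)%MS.
  by apply: submx_trans kerfT_sub; apply/sub_kermxP.
exists (u *m kermx g); split; first by rewrite -mulmxA mulmx_ker mulmx0.
by exists w; rewrite phiE /ident mulmxA addrAC subrr add0r.
Qed.

Hypotheses (fg0 : f *m g = 0) (B_free : row_free B).

Lemma kermx_tr_addsmx :
  (kermx g *m B <= kermx f^T)%MS -> (kermx g *m B :&: g^T <= f *m B)%MS ->
  (kermx f^T <= kermx g *m B + g^T)%MS.
Proof.
move=> kerB_sub cap_sub.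
have sum_sub : (kermx g *m B + g^T <= kermx f^T)%MS.
  by rewrite addsmx_sub kerB_sub; apply/sub_kermxP; rewrite -trmx_mul fg0 trmx0.
rewrite -(mxrank_leqif_sup sum_sub) eqn_leq mxrankS //=.
have := mxrank_sum_cap (kermx g *m B) g^T; have := mxrankS cap_sub.
rewrite !(mxrankMfree _ B_free) !mxrank_ker !mxrank_tr.
by have := rank_leq_row g; lia.
Qed.

End InducedMap.

Theorem lemma4p2 (F : fieldType) (n1 n2 n3 : nat)
  (f : 'M[F]_(n1, n2)) (g : 'M[F]_(n2, n3)) (B : 'M[F]_n2) :
  f *m g = 0 ->
  nondegenerate_pairing B ->
  (trmx B = B \/ trmx B = - B) ->
  (forall v : 'rV[F]_n1, exists psi : 'rV[F]_n3,
      ident B (v *m f) = psi *m dualmap g) ->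
  induced_map_well_defined f g B /\
  (induced_iso f g B <->
   (forall x : 'rV[F]_n2, x *m g = 0 ->
      (exists psi : 'rV[F]_n3, ident B x = psi *m dualmap g) ->
      exists v : 'rV[F]_n1, x = v *m f)).
Proof.
move=> fg0 nondeg B_sym im_f_sub.
have fB_sub : (f *m B <= g^T)%MS.
  by apply: submx_rowwise => v; rewrite mulmxA; apply: im_f_sub.
have fBT_sub : (f *m B^T <= g^T)%MS.
  by case: B_sym => ->; rewrite ?mulmxN ?eqmx_opp.
have ker_g_dual k (x : 'M_(k, n2)) : x *m g = 0 -> x *m B *m f^T = 0.
  rewrite -mulmxA -[B *m f^T]trmxK trmx_mul !trmxK.
  exact: mulmx_trmx_eq0 fBT_sub.
split; first by split=> // x; apply: ker_g_dual.
split=> [[] // | inj]; split=> //.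
apply/induced_surjective_addsmx/kermx_tr_addsmx => //.
- exact: nondegenerate_row_free.
- by apply/sub_kermxP; rewrite ker_g_dual ?mulmx_ker.
- exact: induced_injective_capmx.
Qed.
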